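(* For every set of formulas $\Gamma$ and formula $\varphi$: $\Gamma\vdash_{\mathsf{NeL}+\{\mathrm{I2}\}}\varphi$ iff $\Gamma\models_{\mathfrak{N}_w^{\mathrm{I+}}}\varphi$, where (I2) is the rule scheme $\varphi\Rightarrow\psi^{*},\varphi\Rightarrow\psi\vdash\chi$ and $\mathfrak{N}_w^{\mathrm{I+}}$ is the class of $\mathfrak{N}_w$-models $(\mathbf A,\perp,\{\mathsf{t},\mathsf{f}\})$ such that for all $x,y,z\in A$, $x\perp y^{*}$ and $x\perp y$ imply $x=z$.
   Context: Formulas are built from a countably infinite set of variables using binary $\otimes,\circ$ and unary ${}^{*}$; $\mathbf{Fm}$ is the formula algebra. Abbreviations (also term operations): $\varphi\Rightarrow\psi:=(\varphi\circ\psi^{*})^{*}$; $\varphi\Leftrightarrow\psi:=(\varphi\Rightarrow\psi)\otimes(\psi\Rightarrow\varphi)$; $\varphi\not\Leftrightarrow\psi:=(\varphi\Leftrightarrow\psi)^{*}$; $\varphi\not\Leftrightarrow\psi\not\Leftrightarrow\chi:=((\varphi\not\Leftrightarrow\psi)\otimes(\varphi\not\Leftrightarrow\chi))\otimes(\psi\not\Leftrightarrow\chi)$. $\mathsf{NeL}$: axiom schemes (A1) $\varphi\Rightarrow\varphi$; (A2) $(\varphi\circ\psi)\Rightarrow(\psi\circ\varphi)$; (A3) $\varphi\Rightarrow\varphi^{**}$; (A4) $(\varphi\Rightarrow\psi)\Rightarrow(\varphi\circ\psi)$; (A5) $(\varphi\otimes\psi)\Leftrightarrow(\psi\otimes\varphi)$;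 (A6) $((\varphi\otimes\psi)\Rightarrow\chi)\Rightarrow((\varphi\otimes\chi^{*})\Rightarrow\psi^{*})$; (A7) $(\varphi\not\Leftrightarrow\psi\not\Leftrightarrow\chi)\Rightarrow((\varphi\Rightarrow\psi)\Rightarrow((\psi\Rightarrow\chi)\Rightarrow(\varphi\Rightarrow\chi)))$; rules on arbitrary formulas: $\varphi\Rightarrow\psi,\varphi/\psi$; $\varphi,\psi/\varphi\otimes\psi$; $\varphi\Leftrightarrow\psi,\chi/\chi'$ ($\chi'$ from $\chi$ replacing one or more occurrences of $\varphi$ by $\psi$); $\varphi\otimes\psi/\varphi$. $\mathsf{NeL}+\{\mathrm{I2}\}$ adds the rule scheme (I2). A weak $\mathcal{N}$-algebra is an algebra $(A,\otimes,\circ,{}^{*})$ of type $(2,2,1)$ with $\otimes,\circ$ commutative, $x^{**}=x$, $(x\otimes y)\circ z=(x\otimes z)\circ y$. With $\mathsf{t}\ne\mathsf{f}$ symbols not in $A$, $\overline A=A\cup\{\mathsf{t},\mathsf{f}\}$, an $\mathfrak{N}_w$-model is $(\mathbf A,\perp,\{\mathsf{t},\mathsf{f}\})$, $\mathbf A$ a weak $\mathcal{N}$-algebra, $\perp\subseteq\overline A\times\overline A$, such that for all $x,y,z\in A$: (a) $x\perp x^{*}$; (b) $x\perp y^{*}$ and $y\perp x^{*}$ imply $x=y$; (c) $x\perp y$ iff $x\circ y\perp\mathsf{t}$; (d) $x\perp\mathsf{t}$ iff $x^{*}\perp\mathsf{f}$; (e) $x\perp\mathsf{f}$ and $y\perp\mathsf{f}$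 iff $x\otimes y\perp\mathsf{f}$; (f) $(x\circ y^{*})^{*}\perp(x\circ y)^{*}$; (g) $x\perp y$ and $x\perp\mathsf{f}$ imply $y\perp\mathsf{t}$; (h) $(x\not\Leftrightarrow y\not\Leftrightarrow z)\perp((x\Rightarrow y)\Rightarrow((y\Rightarrow z)\Rightarrow(x\Rightarrow z)))^{*}$. $F_\perp=\{a\in A:a\perp\mathsf{f}\}$. For a class $K$ of such models, $\Gamma\models_K\varphi$ iff there is a finite $\Gamma'\subseteq\Gamma$ such that for every model in $K$ and every homomorphism $h:\mathbf{Fm}\to\mathbf A$, $h(\Gamma')\subseteq F_\perp$ implies $h(\varphi)\in F_\perp$. *)

From Stdlib Require Import List.
Import ListNotations.

Inductive fm : Type :=
| Var : nat -> fm
| Ot  : fm -> fm -> fm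
| Ci  : fm -> fm -> fm
| St  : fm -> fm.

Definition fImp (p q : fm) : fm := St (Ci p (St q)).
Definition fIff (p q : fm) : fm := Ot (fImp p q) (fImp q p).
Definition fNiff (p q : fm) : fm := St (fIff p q).
Definition fNiff3 (p q r : fm) : fm :=
  Ot (Ot (fNiff p q) (fNiff p r)) (fNiff q r).

(** [rep p q b c c']: c' is obtained from c by replacing some occurrences of
    p by q; b = true iff at least one occurrence was replaced. *)
Inductive rep (p q : fm) : bool -> fm -> fm -> Prop :=
| rep_keep : forall c, rep p q false c c
| rep_here : rep p q true p q
| rep_Ot : forall b1 b2 a a' c c',
    rep p q b1 a a' -> rep p q b2 c c' -> rep p q (b1 || b2) (Ot a c) (Ot a' c')
| rep_Ci : forall b1 b2 a a' c c',
    rep p q b1 a a' -> rep p q b2 c c' -> rep p q (b1 || b2) (Ci a c) (Ci a' c')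
| rep_St : forall b a a', rep p q b a a' -> rep p q b (St a) (St a').

Inductive NeL_axiom : fm -> Prop :=
| A1 : forall p, NeL_axiom (fImp p p)
| A2 : forall p q, NeL_axiom (fImp (Ci p q) (Ci q p))
| A3 : forall p, NeL_axiom (fImp p (St (St p)))
| A4 : forall p q, NeL_axiom (fImp (fImp p q) (Ci p q))
| A5 : forall p q, NeL_axiom (fIff (Ot p q) (Ot q p))
| A6 : forall p q r,
    NeL_axiom (fImp (fImp (Ot p q) r) (fImp (Ot p (St r)) (St q)))
| A7 : forall p q r,
    NeL_axiom (fImp (fNiff3 p q r)
                 (fImp (fImp p q) (fImp (fImp q r) (fImp p r)))).

Inductive derI2 (Gamma : fm -> Prop) : fm -> Prop :=
| d_hyp : forall p, Gamma p -> derI2 Gamma p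
| d_ax : forall p, NeL_axiom p -> derI2 Gamma p
| d_mp : forall p q, derI2 Gamma (fImp p q) -> derI2 Gamma p -> derI2 Gamma q
| d_adj : forall p q, derI2 Gamma p -> derI2 Gamma q -> derI2 Gamma (Ot p q)
| d_repl : forall p q c c', derI2 Gamma (fIff p q) -> derI2 Gamma c ->
    rep p q true c c' -> derI2 Gamma c'
| d_simp : forall p q, derI2 Gamma (Ot p q) -> derI2 Gamma p
| d_I2 : forall p q r, derI2 Gamma (fImp p (St q)) -> derI2 Gamma (fImp p q) ->
    derI2 Gamma r.

Inductive ext (A : Type) : Type :=
| El : A -> ext A
| Tt : ext A
| Ff : ext A.
Arguments El {A} _.
Arguments Tt {A}.
Arguments Ff {A}.

Section Ops.
Context {A : Type} (ot ci : A -> A -> A) (st : A -> A).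
Definition aImp (x y : A) : A := st (ci x (st y)).
Definition aIff (x y : A) : A := ot (aImp x y) (aImp y x).
Definition aNiff (x y : A) : A := st (aIff x y).
Definition aNiff3 (x y z : A) : A := ot (ot (aNiff x y) (aNiff x z)) (aNiff y z).
End Ops.

Record NwModel : Type := {
  car : Type;
  mot : car -> car -> car;
  mci : car -> car -> car;
  mst : car -> car;
  perp : ext car -> ext car -> Prop;
  ot_comm : forall x y, mot x y = mot y x;
  ci_comm : forall x y, mci x y = mci y x;
  st_inv : forall x, mst (mst x) = x;
  ot_ci : forall x y z, mci (mot x y) z = mci (mot x z) y;
  c_a : forall x, perp (El x) (El (mst x));
  c_b : forall x y, perp (El x) (El (mst y)) -> perp (El y) (El (mst x)) -> x = y;
  c_c : forall x y, perp (El x) (El y) <-> perp (El (mci x y)) Tt;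
  c_d : forall x, perp (El x) Tt <-> perp (El (mst x)) Ff;
  c_e : forall x y, (perp (El x) Ff /\ perp (El y) Ff) <-> perp (El (mot x y)) Ff;
  c_f : forall x y, perp (El (mst (mci x (mst y)))) (El (mst (mci x y)));
  c_g : forall x y, perp (El x) (El y) -> perp (El x) Ff -> perp (El y) Tt;
  c_h : forall x y z,
    perp (El (aNiff3 mot mci mst x y z))
         (El (mst (aImp mci mst (aImp mci mst x y)
                     (aImp mci mst (aImp mci mst y z) (aImp mci mst x z)))))
}.


Definition designated (M : NwModel) (a : car M) : Prop := perp M (El a) Ff.

Definition is_hom (M : NwModel) (h : fm -> car M) : Prop :=
  (forall p q, h (Ot p q) = mot M (h p) (h q)) /\
  (forall p q, h (Ci p q) = mci M (h p) (h q)) /\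
  (forall p, h (St p) = mst M (h p)).

Definition Iplus (M : NwModel) : Prop :=
  forall x y z : car M,
    perp M (El x) (El (mst M y)) -> perp M (El x) (El y) -> x = z.

Definition sem_conseq (K : NwModel -> Prop) (Gamma : fm -> Prop) (p : fm) : Prop :=
  exists G' : list fm, (forall g, In g G' -> Gamma g) /\
    forall M : NwModel, K M -> forall h : fm -> car M, is_hom M h ->
      (forall g, In g G' -> designated M (h g)) -> designated M (h p).

From Stdlib Require Import List RelationClasses.
From Stdlib Require Import ClassicalEpsilon FunctionalExtensionality.
From Stdlib Require Import PropExtensionality ProofIrrelevance.
Import ListNotations.

(** Soundness: each axiom scheme A1-A7 is designated by the matching model
    condition, and the rules preserve designation; replacement is sound
    because designating [x <=> y] forces [x = y] by (b), and (I2) is sound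
    because in an I+ model its premises collapse the carrier to a point.
    Completeness: the Lindenbaum-Tarski algebra of formulas modulo provable
    equivalence, with [x ⊥ y] iff [⊢ (x ∘ y)*], [x ⊥ t] iff [⊢ x*] and
    [x ⊥ f] iff [⊢ x], is an I+ model; (a)-(h) are the axioms and rules of
    NeL, the I+ condition is (I2), and the canonical projection designates
    exactly the consequences of Gamma. *)

Section Quotient.
Variables (T : Type) (R : T -> T -> Prop).
Hypothesis R_equiv : Equivalence R.

Definition quot : Type := {P : T -> Prop | exists a, P = R a}.

Definition cls (a : T) : quot := exist _ (R a) (ex_intro _ a eq_refl).

Lemma cls_eq_iff a b : cls a = cls b <-> R a b.
Proof.
  split.
  - intro E. apply (f_equal (@proj1_sig _ _)) in E. simpl in E.
    rewrite E. reflexivity.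
  - intro Hab. apply subset_eq_compat, functional_extensionality. intro c.
    apply propositional_extensionality. split; intro H.
    + transitivity a; [symmetry|]; assumption.
    + transitivity b; assumption.
Qed.

Definition repr (x : quot) : T :=
  proj1_sig (constructive_indefinite_description _ (proj2_sig x)).

Lemma cls_repr x : cls (repr x) = x.
Proof.
  unfold repr. destruct (constructive_indefinite_description _ _) as [a Ha].
  destruct x as [P HP]. simpl in *. subst P.
  apply subset_eq_compat. reflexivity.
Qed.

Lemma repr_cls a : R (repr (cls a)) a.
Proof. apply cls_eq_iff, cls_repr. Qed.

Lemma cls_surj x : exists a, x = cls a.
Proof. exists (repr x). symmetry. apply cls_repr. Qed.

Definition lift1 (f : T -> T) (x : quot) : quot := cls (f (repr x)).
Definition lift2 (f : T -> T -> T) (x y : quot) : quot :=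
  cls (f (repr x) (repr y)).
Definition lift_pred (P : T -> Prop) (x : quot) : Prop := P (repr x).

Lemma lift1_cls f a :
  (forall a a', R a a' -> R (f a) (f a')) -> lift1 f (cls a) = cls (f a).
Proof. intro Hf. apply cls_eq_iff, Hf, repr_cls. Qed.

Lemma lift2_cls f a b :
  (forall a a' b b', R a a' -> R b b' -> R (f a b) (f a' b')) ->
  lift2 f (cls a) (cls b) = cls (f a b).
Proof. intro Hf. apply cls_eq_iff, Hf; apply repr_cls. Qed.

Lemma lift_pred_cls P a :
  (forall a a', R a a' -> P a -> P a') -> lift_pred P (cls a) <-> P a.
Proof.
  intro HP. unfold lift_pred. split; apply HP; [apply repr_cls|].
  symmetry. apply repr_cls.
Qed.

End Quotient.

Arguments cls {T R} a.
Arguments lift1 {T R} f x.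
Arguments lift2 {T R} f x y.
Arguments lift_pred {T R} P x.

Section ModelFacts.
Variable M : NwModel.
Notation imp := (aImp (mci M) (mst M)).
Notation biimp := (aIff (mot M) (mci M) (mst M)).

Lemma designated_imp x y :
  designated M (imp x y) <-> perp M (El x) (El (mst M y)).
Proof. unfold designated, aImp. rewrite <- c_d, <- c_c. reflexivity. Qed.

Lemma designated_ot x y :
  designated M (mot M x y) <-> designated M x /\ designated M y.
Proof. symmetry. apply c_e. Qed.

Lemma designated_mp x y :
  designated M (imp x y) -> designated M x -> designated M y.
Proof.
  rewrite designated_imp. intros Hxy Hx.
  pose proof (c_g M _ _ Hxy Hx) as Hy. apply c_d in Hy.
  rewrite st_inv in Hy. exact Hy.
Qed.

Lemma designated_iff_eq x y : designated M (biimp x y) -> x = y.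
Proof.
  unfold aIff. rewrite designated_ot, !designated_imp.
  intros [Hxy Hyx]. exact (c_b M x y Hxy Hyx).
Qed.

Lemma Iplus_designated_any x y z :
  Iplus M -> designated M (imp x (mst M y)) -> designated M (imp x y) ->
  designated M z.
Proof.
  intros HI Hxy' Hxy. pose proof Hxy as Hd.
  rewrite designated_imp, st_inv in Hxy'. rewrite designated_imp in Hxy.
  rewrite <- (HI _ _ z Hxy Hxy'), (HI _ _ (imp x y) Hxy Hxy'). exact Hd.
Qed.

Variable h : fm -> car M.
Hypothesis h_hom : is_hom M h.

Lemma hom_imp p q : h (fImp p q) = imp (h p) (h q).
Proof.
  destruct h_hom as (_ & hCi & hSt). unfold fImp, aImp.
  rewrite hSt, hCi, hSt. reflexivity.
Qed.

Lemma hom_iff p q : h (fIff p q) = biimp (h p) (h q).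
Proof.
  destruct h_hom as (hOt & _ & _). unfold fIff, aIff.
  rewrite hOt, !hom_imp. reflexivity.
Qed.

Lemma hom_niff3 p q r :
  h (fNiff3 p q r) = aNiff3 (mot M) (mci M) (mst M) (h p) (h q) (h r).
Proof.
  destruct h_hom as (hOt & _ & hSt). unfold fNiff3, fNiff, aNiff3, aNiff.
  rewrite !hOt, !hSt, !hom_iff. reflexivity.
Qed.

Lemma hom_rep p q b c c' : h p = h q -> rep p q b c c' -> h c = h c'.
Proof.
  destruct h_hom as (hOt & hCi & hSt). intros E Hrep.
  induction Hrep; rewrite ?hOt, ?hCi, ?hSt; congruence.
Qed.

Lemma axiom_designated p : NeL_axiom p -> designated M (h p).
Proof.
  destruct h_hom as (hOt & hCi & hSt).
  destruct 1; rewrite ?hom_imp, ?hom_niff3, ?hom_iff, ?hOt, ?hCi, ?hSt.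
  - apply designated_imp, c_a.
  - apply designated_imp. rewrite ci_comm. apply c_a.
  - apply designated_imp. rewrite st_inv. apply c_a.
  - apply designated_imp, c_f.
  - apply designated_ot. rewrite !designated_imp, ot_comm. split; apply c_a.
  - (* by [ot_ci] both sides become [w*] and [w], where [w = (p ⊗ r* ) ∘ q] *)
    apply designated_imp. unfold aImp. rewrite !st_inv, ot_ci.
    pose proof (c_a M (mst M (mci M (mot M (h p) (mst M (h r))) (h q)))) as K.
    rewrite st_inv in K. exact K.
  - apply designated_imp, c_h.
Qed.

End ModelFacts.

Section SemanticConsequence.
Variables (K : NwModel -> Prop) (Gamma : fm -> Prop).

Lemma sem_conseq_hyp p : Gamma p -> sem_conseq K Gamma p.
Proof.
  intro Hp. exists [p]. split.
  - intros g [<- | []]. exact Hp.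
  - intros M _ h _ Hg. apply Hg. left. reflexivity.
Qed.

Lemma sem_conseq_valid p :
  (forall M, K M -> forall h, is_hom M h -> designated M (h p)) ->
  sem_conseq K Gamma p.
Proof.
  intro Hp. exists []. split; [intros g []|].
  intros M KM h Hh _. exact (Hp M KM h Hh).
Qed.

Lemma sem_conseq_rule p q r :
  sem_conseq K Gamma p -> sem_conseq K Gamma q ->
  (forall M, K M -> forall h, is_hom M h ->
     designated M (h p) -> designated M (h q) -> designated M (h r)) ->
  sem_conseq K Gamma r.
Proof.
  intros [G1 [S1 V1]] [G2 [S2 V2]] Hr. exists (G1 ++ G2). split.
  - intros g Hg. apply in_app_or in Hg as [Hg | Hg]; auto.
  - intros M KM h Hh Hg. apply Hr; auto.
    + apply V1; auto. intros g Hg1. apply Hg, in_or_app. left. exact Hg1.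
    + apply V2; auto. intros g Hg2. apply Hg, in_or_app. right. exact Hg2.
Qed.

End SemanticConsequence.

Lemma soundness Gamma p : derI2 Gamma p -> sem_conseq Iplus Gamma p.
Proof.
  induction 1 as [p Hp | p Hax | p q _ IH1 _ IH2 | p q _ IH1 _ IH2
                 | p q c c' _ IH1 _ IH2 Hrep | p q _ IH | p q r _ IH1 _ IH2].
  - now apply sem_conseq_hyp.
  - apply sem_conseq_valid. intros M _ h Hh. now apply axiom_designated.
  - apply (sem_conseq_rule _ _ _ _ _ IH1 IH2). intros M _ h Hh.
    rewrite hom_imp by exact Hh. apply designated_mp.
  - apply (sem_conseq_rule _ _ _ _ _ IH1 IH2). intros M _ h [hOt _] Hp Hq.
    rewrite hOt. now apply designated_ot.
  - apply (sem_conseq_rule _ _ _ _ _ IH1 IH2). intros M _ h Hh Hpq Hc.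
    rewrite hom_iff in Hpq by exact Hh.
    rewrite <- (hom_rep M h Hh p q true c c'); [exact Hc | | exact Hrep].
    exact (designated_iff_eq M _ _ Hpq).
  - apply (sem_conseq_rule _ _ _ _ _ IH IH). intros M _ h [hOt _] Hpq _.
    rewrite hOt in Hpq. now apply designated_ot in Hpq.
  - apply (sem_conseq_rule _ _ _ _ _ IH1 IH2). intros M HI h Hh.
    rewrite !(hom_imp M h Hh). destruct Hh as (_ & _ & hSt). rewrite hSt.
    apply Iplus_designated_any, HI.
Qed.

Lemma rep_fIff_l p q a a' c :
  rep p q true a a' -> rep p q true (fIff a c) (fIff a' c).
Proof.
  intro Hrep. unfold fIff, fImp.
  exact (rep_Ot _ _ true true _ _ _ _
           (rep_St _ _ _ _ _ (rep_Ci _ _ true false _ _ _ _ Hrep (rep_keep _ _ _)))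
           (rep_St _ _ _ _ _ (rep_Ci _ _ false true _ _ _ _ (rep_keep _ _ _)
                                (rep_St _ _ _ _ _ Hrep)))).
Qed.

Lemma rep_fIff_r p q a c c' :
  rep p q true c c' -> rep p q true (fIff a c) (fIff a c').
Proof.
  intro Hrep. unfold fIff, fImp.
  exact (rep_Ot _ _ true true _ _ _ _
           (rep_St _ _ _ _ _ (rep_Ci _ _ false true _ _ _ _ (rep_keep _ _ _)
                                (rep_St _ _ _ _ _ Hrep)))
           (rep_St _ _ _ _ _ (rep_Ci _ _ true false _ _ _ _ Hrep (rep_keep _ _ _)))).
Qed.

Section Derivations.
Variable Gamma : fm -> Prop.

Lemma der_iff_refl p : derI2 Gamma (fIff p p).
Proof. apply d_adj; apply d_ax, A1. Qed.

Lemma der_iff_sym p q : derI2 Gamma (fIff p q) -> derI2 Gamma (fIff q p).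
Proof.
  intro Hpq. apply (d_repl _ p q (fIff p p)); [exact Hpq | apply der_iff_refl |].
  apply rep_fIff_l, rep_here.
Qed.

Lemma der_iff_trans p q r :
  derI2 Gamma (fIff p q) -> derI2 Gamma (fIff q r) -> derI2 Gamma (fIff p r).
Proof.
  intros Hpq Hqr. apply (d_repl _ q r (fIff p q)); [exact Hqr | exact Hpq |].
  apply rep_fIff_r, rep_here.
Qed.

Lemma der_iff_equiv : Equivalence (fun p q => derI2 Gamma (fIff p q)).
Proof.
  split; intro p; [apply der_iff_refl | apply der_iff_sym | apply der_iff_trans].
Qed.

Lemma der_iff_rep p q c c' :
  derI2 Gamma (fIff p q) -> rep p q true c c' -> derI2 Gamma (fIff c c').
Proof.
  intros Hpq Hrep. apply (d_repl _ p q (fIff c c)); [exact Hpq | apply der_iff_refl |].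
  apply rep_fIff_r, Hrep.
Qed.

Lemma der_iff_mp p q : derI2 Gamma (fIff p q) -> derI2 Gamma p -> derI2 Gamma q.
Proof. intros Hpq Hp. exact (d_repl _ p q p q Hpq Hp (rep_here p q)). Qed.

Lemma der_iff_Ot p p' q q' :
  derI2 Gamma (fIff p p') -> derI2 Gamma (fIff q q') ->
  derI2 Gamma (fIff (Ot p q) (Ot p' q')).
Proof.
  intros Hp Hq. apply (der_iff_trans _ (Ot p' q)).
  - apply (der_iff_rep _ _ _ _ Hp).
    exact (rep_Ot _ _ true false _ _ _ _ (rep_here _ _) (rep_keep _ _ _)).
  - apply (der_iff_rep _ _ _ _ Hq).
    exact (rep_Ot _ _ false true _ _ _ _ (rep_keep _ _ _) (rep_here _ _)).
Qed.

Lemma der_iff_Ci p p' q q' :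
  derI2 Gamma (fIff p p') -> derI2 Gamma (fIff q q') ->
  derI2 Gamma (fIff (Ci p q) (Ci p' q')).
Proof.
  intros Hp Hq. apply (der_iff_trans _ (Ci p' q)).
  - apply (der_iff_rep _ _ _ _ Hp).
    exact (rep_Ci _ _ true false _ _ _ _ (rep_here _ _) (rep_keep _ _ _)).
  - apply (der_iff_rep _ _ _ _ Hq).
    exact (rep_Ci _ _ false true _ _ _ _ (rep_keep _ _ _) (rep_here _ _)).
Qed.

Lemma der_iff_St p p' : derI2 Gamma (fIff p p') -> derI2 Gamma (fIff (St p) (St p')).
Proof. intro Hp. exact (der_iff_rep _ _ _ _ Hp (rep_St _ _ _ _ _ (rep_here _ _))). Qed.

Lemma der_simp_r p q : derI2 Gamma (Ot p q) -> derI2 Gamma q.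
Proof.
  intro Hpq. apply (d_simp _ q p), (der_iff_mp (Ot p q)); [apply d_ax, A5 | exact Hpq].
Qed.

Lemma der_ci_comm p q : derI2 Gamma (fIff (Ci p q) (Ci q p)).
Proof. apply d_adj; apply d_ax, A2. Qed.

Lemma der_st_st p : derI2 Gamma (fIff (St (St p)) p).
Proof.
  apply d_adj; [| apply d_ax, A3].
  apply (d_repl _ _ _ (fImp (St p) (St p)) _ (der_ci_comm (St p) (St (St p))));
    [apply d_ax, A1 | apply rep_St, rep_here].
Qed.

End Derivations.

Section Lindenbaum.
Variable Gamma : fm -> Prop.

Definition lind_eqv (p q : fm) : Prop := derI2 Gamma (fIff p q).
Definition Lind : Type := quot fm lind_eqv.
Definition lind_cls : fm -> Lind := cls.
Definition lind_ot : Lind -> Lind -> Lind := lift2 Ot.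
Definition lind_ci : Lind -> Lind -> Lind := lift2 Ci.
Definition lind_st : Lind -> Lind := lift1 St.
Definition lind_thm : Lind -> Prop := lift_pred (derI2 Gamma).
Notation lind_imp := (aImp lind_ci lind_st).

Lemma lind_cls_eq_iff p q : lind_cls p = lind_cls q <-> derI2 Gamma (fIff p q).
Proof. exact (cls_eq_iff _ _ (der_iff_equiv Gamma) p q). Qed.

Lemma lind_cls_surj x : exists p, x = lind_cls p.
Proof. apply cls_surj. Qed.

Lemma lind_ot_cls p q : lind_ot (lind_cls p) (lind_cls q) = lind_cls (Ot p q).
Proof. exact (lift2_cls _ _ (der_iff_equiv Gamma) Ot p q (der_iff_Ot Gamma)). Qed.

Lemma lind_ci_cls p q : lind_ci (lind_cls p) (lind_cls q) = lind_cls (Ci p q).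
Proof. exact (lift2_cls _ _ (der_iff_equiv Gamma) Ci p q (der_iff_Ci Gamma)). Qed.

Lemma lind_st_cls p : lind_st (lind_cls p) = lind_cls (St p).
Proof. exact (lift1_cls _ _ (der_iff_equiv Gamma) St p (der_iff_St Gamma)). Qed.

Lemma lind_thm_cls p : lind_thm (lind_cls p) <-> derI2 Gamma p.
Proof. exact (lift_pred_cls _ _ (der_iff_equiv Gamma) _ p (der_iff_mp Gamma)). Qed.

Ltac lind_reduce :=
  repeat match goal with
  | x : Lind |- _ => let p := fresh "p" in destruct (lind_cls_surj x) as [p ->]
  end;
  unfold aNiff3, aNiff, aIff, aImp;
  repeat (rewrite lind_ot_cls || rewrite lind_ci_cls || rewrite lind_st_cls);
  rewrite ?lind_cls_eq_iff, ?lind_thm_cls.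

Lemma lind_ot_comm x y : lind_ot x y = lind_ot y x.
Proof. lind_reduce. apply d_ax, A5. Qed.

Lemma lind_ci_comm x y : lind_ci x y = lind_ci y x.
Proof. lind_reduce. apply der_ci_comm. Qed.

Lemma lind_st_inv x : lind_st (lind_st x) = x.
Proof. lind_reduce. apply der_st_st. Qed.

Lemma lind_imp_antisym x y :
  lind_thm (lind_imp x y) -> lind_thm (lind_imp y x) -> x = y.
Proof. lind_reduce. apply d_adj. Qed.

Lemma lind_ot_ci x y z : lind_ci (lind_ot x y) z = lind_ci (lind_ot x z) y.
Proof.
  (* A6 with [r := z*], read modulo double negation *)
  assert (Half : forall y z, lind_thm (lind_imp (lind_st (lind_ci (lind_ot x y) z))
                                                (lind_st (lind_ci (lind_ot x z) y)))).
  { clear y z. intros y z.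
    destruct (lind_cls_surj x) as [p ->], (lind_cls_surj y) as [q ->],
      (lind_cls_surj z) as [r ->].
    pose proof (proj2 (lind_thm_cls _) (d_ax _ _ (A6 p q (St r)))) as H.
    unfold fImp in H.
    repeat (rewrite <- lind_ot_cls in H || rewrite <- lind_ci_cls in H
            || rewrite <- lind_st_cls in H).
    unfold aImp. rewrite !lind_st_inv in H. rewrite lind_st_inv. exact H. }
  rewrite <- (lind_st_inv (lind_ci (lind_ot x y) z)),
    (lind_imp_antisym _ _ (Half y z) (Half z y)).
  apply lind_st_inv.
Qed.

Lemma lind_thm_ot x y : lind_thm (lind_ot x y) <-> lind_thm x /\ lind_thm y.
Proof.
  lind_reduce. split.
  - intro Hpq. split; [exact (d_simp _ _ _ Hpq) | exact (der_simp_r _ _ _ Hpq)].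
  - intros [Hp Hq]. exact (d_adj _ _ _ Hp Hq).
Qed.

Lemma lind_thm_mp x y : lind_thm (lind_imp x y) -> lind_thm x -> lind_thm y.
Proof. lind_reduce. apply d_mp. Qed.

Lemma lind_thm_I2 x y z :
  lind_thm (lind_imp x (lind_st y)) -> lind_thm (lind_imp x y) -> x = z.
Proof. lind_reduce. intros Hxy' Hxy. exact (d_I2 _ _ _ _ Hxy' Hxy). Qed.

(* [lind_perp (El x) (El (lind_st y))] is convertible to [lind_thm (lind_imp x y)]. *)
Definition lind_perp (a b : ext Lind) : Prop :=
  match a, b with
  | El x, El y => lind_thm (lind_st (lind_ci x y))
  | El x, Tt => lind_thm (lind_st x)
  | El x, Ff => lind_thm x
  | _, _ => False
  end.

Lemma lind_perp_st_r x y :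
  lind_perp (El x) (El y) <-> lind_thm (lind_imp x (lind_st y)).
Proof. simpl. unfold aImp. rewrite lind_st_inv. reflexivity. Qed.

Lemma lind_a x : lind_perp (El x) (El (lind_st x)).
Proof. simpl. lind_reduce. apply d_ax, A1. Qed.

Lemma lind_b x y :
  lind_perp (El x) (El (lind_st y)) -> lind_perp (El y) (El (lind_st x)) -> x = y.
Proof. apply lind_imp_antisym. Qed.

Lemma lind_c x y : lind_perp (El x) (El y) <-> lind_perp (El (lind_ci x y)) Tt.
Proof. reflexivity. Qed.

Lemma lind_d x : lind_perp (El x) Tt <-> lind_perp (El (lind_st x)) Ff.
Proof. reflexivity. Qed.

Lemma lind_e x y :
  lind_perp (El x) Ff /\ lind_perp (El y) Ff <-> lind_perp (El (lind_ot x y)) Ff.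
Proof. symmetry. apply lind_thm_ot. Qed.

Lemma lind_f x y :
  lind_perp (El (lind_st (lind_ci x (lind_st y)))) (El (lind_st (lind_ci x y))).
Proof. simpl. lind_reduce. apply d_ax, A4. Qed.

Lemma lind_g x y :
  lind_perp (El x) (El y) -> lind_perp (El x) Ff -> lind_perp (El y) Tt.
Proof. rewrite lind_perp_st_r. apply lind_thm_mp. Qed.

Lemma lind_h x y z :
  lind_perp (El (aNiff3 lind_ot lind_ci lind_st x y z))
    (El (lind_st (lind_imp (lind_imp x y)
                   (lind_imp (lind_imp y z) (lind_imp x z))))).
Proof. simpl. lind_reduce. apply d_ax, A7. Qed.

Definition lindenbaum : NwModel :=
  {| car := Lind; mot := lind_ot; mci := lind_ci; mst := lind_st;
     perp := lind_perp;
     ot_comm := lind_ot_comm; ci_comm := lind_ci_comm; st_inv := lind_st_inv;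
     ot_ci := lind_ot_ci; c_a := lind_a; c_b := lind_b; c_c := lind_c;
     c_d := lind_d; c_e := lind_e; c_f := lind_f; c_g := lind_g;
     c_h := lind_h |}.

Lemma lindenbaum_Iplus : Iplus lindenbaum.
Proof.
  intros x y z Hxy' Hxy. apply lind_perp_st_r in Hxy.
  exact (lind_thm_I2 x y z Hxy Hxy').
Qed.

Lemma lindenbaum_hom : is_hom lindenbaum lind_cls.
Proof.
  split; [| split]; intros; symmetry;
    [apply lind_ot_cls | apply lind_ci_cls | apply lind_st_cls].
Qed.

End Lindenbaum.

Lemma completeness Gamma p : sem_conseq Iplus Gamma p -> derI2 Gamma p.
Proof.
  intros [G' [HG' Hvalid]].
  apply (lind_thm_cls Gamma), (Hvalid _ (lindenbaum_Iplus Gamma) _ (lindenbaum_hom Gamma)).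
  intros g Hg. apply (lind_thm_cls Gamma), d_hyp, HG', Hg.
Qed.

Theorem theorem5p5 : forall (Gamma : fm -> Prop) (phi : fm),
  derI2 Gamma phi <-> sem_conseq Iplus Gamma phi.
Proof.
  intros Gamma phi. split; [apply soundness | apply completeness].
Qed.
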